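(* Let $n\ge2$, let $\mathbf{p}=(p_1,\dots,p_n)$ be positive weights with $\sum p_i=1$ and let $\mathbf{x}=(x_1,\dots,x_n)$ be positive reals, not all equal. Define, for $s\in\mathbb{R}$, $$\chi_s(\mathbf p,\mathbf x)=\begin{cases}\dfrac{\sum p_i x_i^s-\left(\sum p_i x_i\right)^s}{s(s-1)}, & s\neq 0,1,\\[2mm] \log\left(\sum p_i x_i\right)-\sum p_i\log x_i, & s=0,\\[1mm] \sum p_i x_i\log x_i-\left(\sum p_ix_i\right)\log\left(\sum p_i x_i\right), & s=1.\end{cases}$$ Then $\chi_s(\mathbf p,\mathbf x)>0$ for all $s$, and the function $s\mapsto \chi_{s+1}(\mathbf p,\mathbf x)/\chi_s(\mathbf p,\mathbf x)$ is monotone increasing on $\mathbb{R}$. Equivalently, for every $s\in\mathbb{R}$ and $r>0$, $$\chi_s(\mathbf p,\mathbf x)\,\chi_{s+r+1}(\mathbf p,\mathbf x)\ge \chi_{s+1}(\mathbf p,\mathbf x)\,\chi_{s+r}(\mathbf p,\mathbf x).$$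
   Context: All sums run over $i=1,\dots,n$. *)

From Stdlib Require Import Reals.
Open Scope R_scope.

(* sum_{i=0}^{n-1} f i  (the paper's indices 1..n are shifted to 0..n-1) *)
Fixpoint rsum (n : nat) (f : nat -> R) : R :=
  match n with
  | O => 0
  | S m => rsum m f + f m
  end.

Definition wmean (n : nat) (p x : nat -> R) : R := rsum n (fun i => p i * x i).

Definition chi (n : nat) (p x : nat -> R) (s : R) : R :=
  if Req_EM_T s 0 then
    ln (wmean n p x) - rsum n (fun i => p i * ln (x i))
  else if Req_EM_T s 1 then
    rsum n (fun i => p i * x i * ln (x i)) - wmean n p x * ln (wmean n p x)
  else
    (rsum n (fun i => p i * Rpower (x i) s) - Rpower (wmean n p x) s)
      / (s * (s - 1)).

(* The proof rests on a single observation: chi_s is a Jensen gap,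
     chi_s(p,x) = sum p_i f_s(x_i) - f_s(m),   m = sum p_i x_i,
   for the kernel f_s(t) = t^s/(s(s-1)) (with -ln t and t ln t at s = 0, 1),
   whose second derivative is t^(s-2) > 0.  Since sum p_i = 1, a Jensen gap
   equals sum p_i (F(x_i) - F(m) - F'(m)(x_i - m)), a weighted sum of
   tangent-line remainders, which the mean value theorem shows to be >= 0
   for F'' >= 0 and > 0 at x_i <> m when F'' > 0.  This gives chi_s > 0.
   For log-convexity put c = chi_{s+1}/chi_s and apply Jensen to
     G = f_{s+r+1} - c f_{s+r} - c^r f_{s+1} + c^(r+1) f_s,
   whose second derivative t^(s-2) (t - c)(t^r - c^r) is >= 0; by linearity
   of the gap and c chi_s = chi_{s+1} this reads chi_{s+r+1} >= c chi_{s+r}. *)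

From Stdlib Require Import Reals Lra Lia.
From Coquelicot Require Import Coquelicot.
Open Scope R_scope.

Lemma rsum_ext (n : nat) (f g : nat -> R) :
  (forall i, (i < n)%nat -> f i = g i) -> rsum n f = rsum n g.
Proof. induction n; simpl; intros H; [reflexivity|]. rewrite IHn, H; auto. Qed.

Lemma rsum_plus (n : nat) (f g : nat -> R) :
  rsum n (fun i => f i + g i) = rsum n f + rsum n g.
Proof. induction n; simpl; [ring|]. rewrite IHn; ring. Qed.

Lemma rsum_minus (n : nat) (f g : nat -> R) :
  rsum n (fun i => f i - g i) = rsum n f - rsum n g.
Proof. induction n; simpl; [ring|]. rewrite IHn; ring. Qed.

Lemma rsum_scal (n : nat) (c : R) (f : nat -> R) :
  rsum n (fun i => c * f i) = c * rsum n f.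
Proof. induction n; simpl; [ring|]. rewrite IHn; ring. Qed.

Lemma rsum_nonneg (n : nat) (f : nat -> R) :
  (forall i, (i < n)%nat -> 0 <= f i) -> 0 <= rsum n f.
Proof.
  induction n; simpl; intros H; [lra|].
  assert (0 <= f n) by auto. assert (0 <= rsum n f) by auto. lra.
Qed.

Lemma rsum_pos (n : nat) (f : nat -> R) (j : nat) :
  (forall i, (i < n)%nat -> 0 <= f i) -> (j < n)%nat -> 0 < f j -> 0 < rsum n f.
Proof.
  induction n; simpl; intros H Hj Hf; [lia|].
  destruct (Nat.eq_dec j n) as [->|Hjn].
  - assert (0 <= rsum n f) by (apply rsum_nonneg; auto). lra.
  - assert (0 <= f n) by auto. assert (0 < rsum n f) by (apply IHn; auto; lia). lra.
Qed.

Lemma mvt_between (F dF : R -> R) (a b : R) :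
  (forall t, 0 < t -> derivable_pt_lim F t (dF t)) -> 0 < a -> 0 < b -> a <> b ->
  exists c, 0 < (c - a) * (b - c) /\ F b - F a = dF c * (b - a).
Proof.
  intros HF Ha Hb Hab.
  destruct (Rtotal_order a b) as [Hlt|[Heq|Hgt]]; [| contradiction |].
  - destruct (MVT_cor2 F dF a b Hlt) as [c [Ec Hc]]; [intros; apply HF; lra|].
    exists c. split; [nra | lra].
  - destruct (MVT_cor2 F dF b a Hgt) as [c [Ec Hc]]; [intros; apply HF; lra|].
    exists c. split; [nra | lra].
Qed.

Lemma tangent_remainder (F dF d2F : R -> R) (m y : R) :
  (forall t, 0 < t -> derivable_pt_lim F t (dF t)) ->
  (forall t, 0 < t -> derivable_pt_lim dF t (d2F t)) ->
  0 < m -> 0 < y -> y <> m ->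
  exists e k, 0 < e /\ 0 < k /\ F y - F m - dF m * (y - m) = k * d2F e.
Proof.
  intros HF HdF Hm Hy Hym.
  destruct (mvt_between F dF m y HF Hm Hy (not_eq_sym Hym)) as [c [Hc Ec]].
  assert (Hcpos : 0 < c) by nra.
  assert (Hcm : c <> m) by (intros ->; nra).
  destruct (mvt_between dF d2F m c HdF Hm Hcpos (not_eq_sym Hcm)) as [e [He Ee]].
  exists e, ((c - m) * (y - m)). split; [nra|]. split; [nra|].
  rewrite Ec. replace (dF c) with (dF m + d2F e * (c - m)) by lra. ring.
Qed.

Lemma tangent_remainder_nonneg (F dF d2F : R -> R) (m y : R) :
  (forall t, 0 < t -> derivable_pt_lim F t (dF t)) ->
  (forall t, 0 < t -> derivable_pt_lim dF t (d2F t)) ->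
  (forall t, 0 < t -> 0 <= d2F t) -> 0 < m -> 0 < y ->
  0 <= F y - F m - dF m * (y - m).
Proof.
  intros HF HdF Hd2 Hm Hy.
  destruct (Req_dec y m) as [->|Hym]; [lra|].
  destruct (tangent_remainder F dF d2F m y HF HdF Hm Hy Hym) as [e [k [He [Hk ->]]]].
  apply Rmult_le_pos; [lra | auto].
Qed.

Lemma tangent_remainder_pos (F dF d2F : R -> R) (m y : R) :
  (forall t, 0 < t -> derivable_pt_lim F t (dF t)) ->
  (forall t, 0 < t -> derivable_pt_lim dF t (d2F t)) ->
  (forall t, 0 < t -> 0 < d2F t) -> 0 < m -> 0 < y -> y <> m ->
  0 < F y - F m - dF m * (y - m).
Proof.
  intros HF HdF Hd2 Hm Hy Hym.
  destruct (tangent_remainder F dF d2F m y HF HdF Hm Hy Hym) as [e [k [He [Hk ->]]]].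
  apply Rmult_lt_0_compat; auto.
Qed.

Definition jensen_gap (n : nat) (p x : nat -> R) (F : R -> R) : R :=
  rsum n (fun i => p i * F (x i)) - F (wmean n p x).

Lemma jensen_gap_tangent (n : nat) (p x : nat -> R) (F dF : R -> R) :
  rsum n p = 1 ->
  jensen_gap n p x F =
  rsum n (fun i => p i * (F (x i) - F (wmean n p x)
                          - dF (wmean n p x) * (x i - wmean n p x))).
Proof.
  intro Hs. unfold jensen_gap. set (m := wmean n p x). symmetry.
  rewrite (rsum_ext n _ (fun i => p i * F (x i)
             - (F m * p i + dF m * (p i * x i) - dF m * m * p i)))
    by (intros; ring).
  rewrite !rsum_minus, rsum_plus, !rsum_scal, Hs. unfold m, wmean. ring.
Qed.

Lemma jensen_gap_lincomb (n : nat) (p x : nat -> R) (F1 F2 F3 F4 : R -> R)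
    (c1 c2 c3 : R) :
  jensen_gap n p x (fun t => F1 t - c1 * F2 t - c2 * F3 t + c3 * F4 t) =
  jensen_gap n p x F1 - c1 * jensen_gap n p x F2 - c2 * jensen_gap n p x F3
  + c3 * jensen_gap n p x F4.
Proof.
  unfold jensen_gap.
  rewrite (rsum_ext n _ (fun i => p i * F1 (x i) - c1 * (p i * F2 (x i))
             - c2 * (p i * F3 (x i)) + c3 * (p i * F4 (x i)))) by (intros; ring).
  rewrite rsum_plus, !rsum_minus, !rsum_scal. ring.
Qed.

Section Jensen.
Variables (n : nat) (p x : nat -> R).
Hypothesis hp : forall i, (i < n)%nat -> 0 < p i.
Hypothesis hsum : rsum n p = 1.
Hypothesis hx : forall i, (i < n)%nat -> 0 < x i.

Lemma wmean_pos : (0 < n)%nat -> 0 < wmean n p x.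
Proof.
  intro Hn. apply (rsum_pos n _ 0%nat); [|exact Hn|].
  - intros i Hi. apply Rmult_le_pos; apply Rlt_le; auto.
  - apply Rmult_lt_0_compat; auto.
Qed.

Lemma jensen_gap_nonneg (F dF d2F : R -> R) :
  (forall t, 0 < t -> derivable_pt_lim F t (dF t)) ->
  (forall t, 0 < t -> derivable_pt_lim dF t (d2F t)) ->
  (forall t, 0 < t -> 0 <= d2F t) -> (0 < n)%nat ->
  0 <= jensen_gap n p x F.
Proof.
  intros HF HdF Hd2 Hn. rewrite (jensen_gap_tangent n p x F dF hsum).
  apply rsum_nonneg. intros i Hi. apply Rmult_le_pos; [apply Rlt_le; auto|].
  apply (tangent_remainder_nonneg F dF d2F); auto using wmean_pos.
Qed.

Lemma jensen_gap_pos (F dF d2F : R -> R) (j : nat) :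
  (forall t, 0 < t -> derivable_pt_lim F t (dF t)) ->
  (forall t, 0 < t -> derivable_pt_lim dF t (d2F t)) ->
  (forall t, 0 < t -> 0 < d2F t) -> (j < n)%nat -> x j <> wmean n p x ->
  0 < jensen_gap n p x F.
Proof.
  intros HF HdF Hd2 Hj Hxj.
  assert (Hm : 0 < wmean n p x) by (apply wmean_pos; lia).
  rewrite (jensen_gap_tangent n p x F dF hsum).
  apply (rsum_pos n _ j); [|exact Hj|].
  - intros i Hi. apply Rmult_le_pos; [apply Rlt_le; auto|].
    apply (tangent_remainder_nonneg F dF d2F); auto.
    intros t Ht. apply Rlt_le; auto.
  - apply Rmult_lt_0_compat; [auto|].
    apply (tangent_remainder_pos F dF d2F); auto.
Qed.

End Jensen.

Definition kernel (a t : R) : R :=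
  if Req_EM_T a 0 then - ln t
  else if Req_EM_T a 1 then t * ln t
  else exp (a * ln t) / (a * (a - 1)).

Definition kernel_d1 (a t : R) : R :=
  if Req_EM_T a 0 then - / t
  else if Req_EM_T a 1 then ln t + 1
  else exp ((a - 1) * ln t) / (a - 1).

Definition kernel_d2 (a t : R) : R := exp ((a - 2) * ln t).

Lemma exp_pred_mul_ln (a t : R) : 0 < t -> exp ((a - 1) * ln t) = exp (a * ln t) / t.
Proof.
  intro Ht. replace ((a - 1) * ln t) with (a * ln t + - ln t) by ring.
  rewrite exp_plus, exp_Ropp, exp_ln by exact Ht. reflexivity.
Qed.

Lemma kernel_derivative (a t : R) : 0 < t ->
  derivable_pt_lim (kernel a) t (kernel_d1 a t).
Proof.
  intro Ht. apply is_derive_Reals. unfold kernel, kernel_d1.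
  destruct (Req_EM_T a 0) as [H0|H0]; [|destruct (Req_EM_T a 1) as [H1|H1]].
  - auto_derive; [lra|]. field. lra.
  - auto_derive; [lra|]. field. lra.
  - auto_derive; [lra|]. rewrite exp_pred_mul_ln by lra. field. repeat split; lra.
Qed.

Lemma kernel_second_derivative (a t : R) : 0 < t ->
  derivable_pt_lim (kernel_d1 a) t (kernel_d2 a t).
Proof.
  intro Ht. apply is_derive_Reals. unfold kernel_d1, kernel_d2.
  destruct (Req_EM_T a 0) as [H0|H0]; [|destruct (Req_EM_T a 1) as [H1|H1]].
  - auto_derive; [lra|]. subst a.
    replace ((0 - 2) * ln t) with (- ln t + - ln t) by ring.
    rewrite exp_plus, exp_Ropp, exp_ln by lra. field. lra.
  - auto_derive; [lra|]. subst a.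
    replace ((1 - 2) * ln t) with (- ln t) by ring.
    rewrite exp_Ropp, exp_ln by lra. field. lra.
  - auto_derive; [lra|]. replace (a - 2) with ((a - 1) - 1) by ring.
    rewrite (exp_pred_mul_ln (a - 1)) by lra. field. repeat split; lra.
Qed.

Lemma chi_jensen_gap (n : nat) (p x : nat -> R) (a : R) :
  chi n p x a = jensen_gap n p x (kernel a).
Proof.
  unfold chi, jensen_gap, kernel.
  destruct (Req_EM_T a 0); [|destruct (Req_EM_T a 1)].
  - rewrite (rsum_ext n (fun i => p i * - ln (x i)) (fun i => -1 * (p i * ln (x i))))
      by (intros; ring).
    rewrite rsum_scal. ring.
  - rewrite (rsum_ext n (fun i => p i * (x i * ln (x i))) (fun i => p i * x i * ln (x i)))
      by (intros; ring).
    ring.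
  - rewrite (rsum_ext n (fun i => p i * (exp (a * ln (x i)) / (a * (a - 1))))
                        (fun i => / (a * (a - 1)) * (p i * Rpower (x i) a)))
      by (intros; unfold Rpower, Rdiv; ring).
    rewrite rsum_scal. unfold Rpower, Rdiv. ring.
Qed.

Lemma derivable_pt_lim_lincomb (F1 F2 F3 F4 : R -> R) (d1 d2 d3 d4 t c1 c2 c3 : R) :
  derivable_pt_lim F1 t d1 -> derivable_pt_lim F2 t d2 ->
  derivable_pt_lim F3 t d3 -> derivable_pt_lim F4 t d4 ->
  derivable_pt_lim (fun t => F1 t - c1 * F2 t - c2 * F3 t + c3 * F4 t) t
    (d1 - c1 * d2 - c2 * d3 + c3 * d4).
Proof.
  intros H1 H2 H3 H4.
  exact (derivable_pt_lim_plus _ _ _ _ _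
    (derivable_pt_lim_minus _ _ _ _ _
      (derivable_pt_lim_minus _ _ _ _ _ H1 (derivable_pt_lim_scal _ c1 _ _ H2))
      (derivable_pt_lim_scal _ c2 _ _ H3))
    (derivable_pt_lim_scal _ c3 _ _ H4)).
Qed.

(* t |-> t^r is increasing for r > 0, hence (t - c)(t^r - c^r) >= 0. *)
Lemma same_sign_power_difference (r c t : R) : 0 < r -> 0 < c -> 0 < t ->
  0 <= (t - c) * (exp (r * ln t) - exp (r * ln c)).
Proof.
  intros Hr Hc Ht.
  destruct (Rtotal_order t c) as [Hlt|[->|Hgt]]; [| lra |].
  - assert (exp (r * ln t) < exp (r * ln c)).
    { apply exp_increasing, Rmult_lt_compat_l; [exact Hr|]. apply ln_increasing; lra. }
    nra.
  - assert (exp (r * ln c) < exp (r * ln t)).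
    { apply exp_increasing, Rmult_lt_compat_l; [exact Hr|]. apply ln_increasing; lra. }
    nra.
Qed.

Lemma lincomb_second_derivative_nonneg (s r c t : R) : 0 < r -> 0 < c -> 0 < t ->
  0 <= kernel_d2 (s + r + 1) t - c * kernel_d2 (s + r) t
       - exp (r * ln c) * kernel_d2 (s + 1) t + c * exp (r * ln c) * kernel_d2 s t.
Proof.
  intros Hr Hc Ht. unfold kernel_d2.
  replace ((s + r + 1 - 2) * ln t) with ((s - 2) * ln t + r * ln t + ln t) by ring.
  replace ((s + r - 2) * ln t) with ((s - 2) * ln t + r * ln t) by ring.
  replace ((s + 1 - 2) * ln t) with ((s - 2) * ln t + ln t) by ring.
  rewrite !exp_plus, exp_ln by exact Ht.
  set (E := exp ((s - 2) * ln t)). assert (0 < E) by apply exp_pos.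
  match goal with |- 0 <= ?g =>
    replace g with (E * ((t - c) * (exp (r * ln t) - exp (r * ln c)))) by ring end.
  apply Rmult_le_pos; [lra|]. apply same_sign_power_difference; assumption.
Qed.

Section Chi.
Variables (n : nat) (p x : nat -> R).
Hypothesis hp : forall i, (i < n)%nat -> 0 < p i.
Hypothesis hsum : rsum n p = 1.
Hypothesis hx : forall i, (i < n)%nat -> 0 < x i.

(* Strict Jensen for the kernel f_s, whose second derivative is positive. *)
Lemma chi_pos (s : R) (j : nat) :
  (j < n)%nat -> x j <> wmean n p x -> 0 < chi n p x s.
Proof.
  intros Hj Hxj. rewrite chi_jensen_gap.
  apply (jensen_gap_pos n p x hp hsum hx _ (kernel_d1 s) (kernel_d2 s) j);
    auto using kernel_derivative, kernel_second_derivative.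
  intros; apply exp_pos.
Qed.

(* The cross inequality: Jensen applied to G with c = chi_{s+1}/chi_s. *)
Lemma chi_cross (s r : R) :
  0 < r -> 0 < chi n p x s -> 0 < chi n p x (s + 1) -> (0 < n)%nat ->
  chi n p x s * chi n p x (s + r + 1) >= chi n p x (s + 1) * chi n p x (s + r).
Proof.
  intros Hr Hs Hs1 Hn.
  set (c := chi n p x (s + 1) / chi n p x s).
  assert (Hc : 0 < c) by (apply Rdiv_lt_0_compat; assumption).
  set (cr := exp (r * ln c)).
  assert (HG : 0 <= jensen_gap n p x (fun t => kernel (s + r + 1) t
                 - c * kernel (s + r) t - cr * kernel (s + 1) t + (c * cr) * kernel s t)).
  { apply (jensen_gap_nonneg n p x hp hsum hx _
      (fun t => kernel_d1 (s + r + 1) t - c * kernel_d1 (s + r) t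
                - cr * kernel_d1 (s + 1) t + (c * cr) * kernel_d1 s t)
      (fun t => kernel_d2 (s + r + 1) t - c * kernel_d2 (s + r) t
                - cr * kernel_d2 (s + 1) t + (c * cr) * kernel_d2 s t)); [| | |exact Hn].
    - intros; apply derivable_pt_lim_lincomb; apply kernel_derivative; assumption.
    - intros; apply derivable_pt_lim_lincomb; apply kernel_second_derivative; assumption.
    - intros; apply lincomb_second_derivative_nonneg; assumption. }
  rewrite jensen_gap_lincomb, <- !chi_jensen_gap in HG.
  assert (Ec : chi n p x (s + 1) = c * chi n p x s) by (unfold c; field; lra).
  rewrite Ec in HG |- *.
  assert (chi n p x (s + r + 1) >= c * chi n p x (s + r)) by nra.
  nra.
Qed.

End Chi.

Lemma ratio_monotone_of_cross (g : R -> R) :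
  (forall s, 0 < g s) ->
  (forall s r, 0 < r -> g s * g (s + r + 1) >= g (s + 1) * g (s + r)) ->
  forall s t, s <= t -> g (s + 1) / g s <= g (t + 1) / g t.
Proof.
  intros Hpos Hcross s t Hst.
  destruct (Req_dec s t) as [->|Hne]; [lra|].
  assert (H := Hcross s (t - s) ltac:(lra)).
  replace (s + (t - s) + 1) with (t + 1) in H by ring.
  replace (s + (t - s)) with t in H by ring.
  assert (Hs := Hpos s). assert (Ht := Hpos t).
  apply (Rmult_le_reg_r (g s * g t)); [nra|].
  replace (g (s + 1) / g s * (g s * g t)) with (g (s + 1) * g t) by (field; lra).
  replace (g (t + 1) / g t * (g s * g t)) with (g s * g (t + 1)) by (field; lra).
  lra.
Qed.

Theorem mainTheorem6 (n : nat) (p x : nat -> R)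
  (hn : (2 <= n)%nat)
  (hp : forall i, (i < n)%nat -> 0 < p i)
  (hsum : rsum n p = 1)
  (hx : forall i, (i < n)%nat -> 0 < x i)
  (hne : exists i j, (i < n)%nat /\ (j < n)%nat /\ x i <> x j) :
  (forall s : R, 0 < chi n p x s) /\
  (forall s t : R, s <= t ->
     chi n p x (s + 1) / chi n p x s <= chi n p x (t + 1) / chi n p x t) /\
  (forall s r : R, 0 < r ->
     chi n p x s * chi n p x (s + r + 1) >= chi n p x (s + 1) * chi n p x (s + r)).
Proof.
  (* two distinct points cannot both equal the mean *)
  assert (Hoff : exists j, (j < n)%nat /\ x j <> wmean n p x).
  { destruct hne as [i [j [Hi [Hj Hij]]]].
    destruct (Req_dec (x i) (wmean n p x)) as [Ei|Ei]; [|now exists i].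
    exists j. split; [exact Hj|]. intro Ej. apply Hij. congruence. }
  destruct Hoff as [j [Hj Hxj]].
  assert (Hpos : forall s, 0 < chi n p x s)
    by (intro s; exact (chi_pos n p x hp hsum hx s j Hj Hxj)).
  assert (Hcross : forall s r, 0 < r ->
    chi n p x s * chi n p x (s + r + 1) >= chi n p x (s + 1) * chi n p x (s + r)).
  { intros s r Hr. apply chi_cross; auto. lia. }
  split; [exact Hpos|]. split; [|exact Hcross].
  exact (ratio_monotone_of_cross (chi n p x) Hpos Hcross).
Qed.
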